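(* Let $v\in\mathbb{Z}^d$ be primitive and $p$ an odd prime. For each $h\in M_0$ write $h=c_1(h)\gamma_1(h)$ and $g_v^{-1}hg_v=c_2(h)\gamma_2(h)^{-1}$ with $(c_1(h),c_2(h))\in\mathbb{G}(\mathbb{Z}_p)$ and $(\gamma_1(h),\gamma_2(h))\in\mathbb{G}(\mathbb{Z}[1/p])$. Then: (1) for $h\in M_0$, $q_\infty(O_{v,p,h})=\Delta K\,(k_v\gamma_1(h)^{-1},a_vk_vg_v\gamma_2(h))\,\mathbb{G}(\mathbb{Z})$; (2) for $h\neq h'$ in $M_0$, $Kk_v\gamma_1(h)^{-1}\mathbb{G}_1(\mathbb{Z})\cap Kk_v\gamma_1(h')^{-1}\mathbb{G}_1(\mathbb{Z})=\emptyset$, and in particular $q_\infty(O_{v,p,h})\cap q_\infty(O_{v,p,h'})=\emptyset$; (3) for $h\in M_0$, $q_\infty^{-1}\big(\Delta K(k_v\gamma_1(h)^{-1},a_vk_vg_v\gamma_2(h))\mathbb{G}(\mathbb{Z})\big)\cap O_{v,p}=O_{v,p,h}$.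
   Context: Setup: $\mathbb{G}_1=\mathrm{SO}_d$, $\mathbb{G}_2=\mathrm{ASL}_{d-1}=\{\begin{pmatrix}g&*\\0&1\end{pmatrix}:g\in\mathrm{SL}_{d-1}\}$, $\mathbb{G}=\mathbb{G}_1\times\mathbb{G}_2$. Elements of $\mathbb{G}(\mathbb{R}\times\mathbb{Q}_p)$ are written $((g_{1,\infty},g_{1,p}),(g_{2,\infty},g_{2,p}))$; $\mathbb{G}(\mathbb{Z}[1/p])$ is embedded diagonally; $\mathcal{Y}_p=\mathbb{G}(\mathbb{R}\times\mathbb{Q}_p)/\mathbb{G}(\mathbb{Z}[1/p])$; $\mathcal{U}=\mathbb{G}(\mathbb{R}\times\mathbb{Z}_p)\mathbb{G}(\mathbb{Z}[1/p])\subseteq\mathcal{Y}_p$. The map $q_\infty:\mathcal{U}\to\mathbb{G}(\mathbb{R})/\mathbb{G}(\mathbb{Z})$ is defined by writing $g_{i,p}=c_{i,p}\gamma_{i,p}$ with $c_{i,p}\in\mathbb{G}_i(\mathbb{Z}_p)$, $\gamma_{i,p}\in\mathbb{G}_i(\mathbb{Z}[1/p])$ and setting $q_\infty(((g_{1,\infty},g_{1,p}),(g_{2,\infty},g_{2,p}))\mathbb{G}(\mathbb{Z}[1/p]))=(g_{1,\infty}\gamma_{1,p}^{-1},g_{2,\infty}\gamma_{2,p}^{-1})\mathbb{G}(\mathbb{Z})$. For primitive $v$: $\Lambda_v=v^\perp\cap\mathbb{Z}^d$; $H_v\le\mathrm{SO}_d$ the stabilizer of $v$; $g_v\in\mathrm{SL}_d(\mathbb{Z})$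 a fixed matrix whose first $d-1$ columns form a positively oriented $\mathbb{Z}$-basis of $\Lambda_v$; $L_v=\{(h,g_v^{-1}hg_v):h\in H_v\}$; $k_v\in\mathrm{SO}_d(\mathbb{R})$ fixed with $k_vv=\|v\|e_d$; $a_v=\mathrm{diag}(\|v\|^{-1/(d-1)},\dots,\|v\|^{-1/(d-1)},\|v\|)$; $O_{v,p}=((k_v,e),(a_vk_vg_v,e))\cdot L_v(\mathbb{R}\times\mathbb{Q}_p)\mathbb{G}(\mathbb{Z}[1/p])$. $M$ is a finite set of representatives of $H_v(\mathbb{Q}_p)=\bigsqcup_{h\in M}H_v(\mathbb{Z}_p)hH_v(\mathbb{Z}[1/p])$; $M_0=\{h\in M:h\in\mathrm{SO}_d(\mathbb{Z}_p)\mathrm{SO}_d(\mathbb{Z}[1/p])\}$. $K=H_{e_d}(\mathbb{R})\cong\mathrm{SO}_{d-1}(\mathbb{R})$, $\Delta K=\{(k,k):k\in K\}\le\mathbb{G}(\mathbb{R})$, $\Delta K\times L_v(\mathbb{Z}_p)=\{((k,h'),(k,g_v^{-1}h'g_v)):k\in K,h'\in H_v(\mathbb{Z}_p)\}$, and $O_{v,p,h}=(\Delta K\times L_v(\mathbb{Z}_p))\cdot((k_v,h),(a_vk_vg_v,g_v^{-1}hg_v))\mathbb{G}(\mathbb{Z}[1/p])$. *)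

From HB Require Import structures.
From mathcomp Require Import all_boot all_order all_algebra.
From mathcomp Require Import classical_sets reals exp.
Set Implicit Arguments. Unset Strict Implicit. Unset Printing Implicit Defensive.
Import Order.TTheory GRing.Theory Num.Theory.
Local Open Scope ring_scope.
Local Open Scope classical_set_scope.

(* The p-adic absolute value on Q and an axiomatic description of Q_p *)
(* (the completion of Q for |.|_p, unique up to isometric iso).       *)
Definition pabs (p : nat) (q : rat) : rat :=
  if q == 0 then 0
  else (p%:R ^+ logn p `|denq q|%N) / (p%:R ^+ logn p `|numq q|%N).

Record is_Qp (p : nat) (F : fieldType) (nrm : F -> rat) : Prop := IsQp {
  Qp_nrm_ge0 : forall x, 0 <= nrm x;
  Qp_nrm_eq0 : forall x, nrm x = 0 <-> x = 0;
  Qp_nrmM : forall x y, nrm (x * y) = nrm x * nrm y;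
  Qp_nrmD : forall x y, nrm (x + y) <= Num.max (nrm x) (nrm y);
  Qp_nrm_rat : forall q : rat, nrm (ratr q) = pabs p q;
  Qp_dense : forall x (e : rat), 0 < e -> exists q : rat, nrm (x - ratr q) < e;
  Qp_complete : forall u : nat -> F,
    (forall e : rat, 0 < e -> exists N, forall m k, (N <= m)%N -> (N <= k)%N ->
        nrm (u m - u k) < e) ->
    exists l, forall e : rat, 0 < e -> exists N, forall m, (N <= m)%N ->
        nrm (u m - l) < e }.

Definition Zp (F : fieldType) (nrm : F -> rat) : F -> Prop := fun x => nrm x <= 1.
Definition Zinvp (p : nat) : rat -> Prop := fun q => exists k : nat, denq q = (p ^ k)%N%:Z.
Definition Zint : rat -> Prop := fun q => denq q = 1.
Definition anyA (A : Type) : A -> Prop := fun _ => True.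

(* d = n.+1 throughout. *)
Definition e_last (A : ringType) (n : nat) : 'cV[A]_n.+1 :=
  \col_i ((i == ord_max)%:R).

(* SO_d(S) and ASL_{d-1}(S) for a subring S of a commutative ring A *)
Definition isSO (A : comUnitRingType) (n : nat) (S : A -> Prop) (g : 'M[A]_n.+1) :=
  [/\ forall i j, S (g i j), g^T *m g = 1%:M & \det g = 1].
Definition isASL (A : comUnitRingType) (n : nat) (S : A -> Prop) (g : 'M[A]_n.+1) :=
  [/\ forall i j, S (g i j), (forall j, g ord_max j = (j == ord_max)%:R) & \det g = 1].
Definition inG (A : comUnitRingType) (n : nat) (S : A -> Prop)
  (x : 'M[A]_n.+1 * 'M[A]_n.+1) := isSO S x.1 /\ isASL S x.2.

Definition vA (A : comUnitRingType) (n : nat) (v : 'cV[int]_n.+1) : 'cV[A]_n.+1 :=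
  map_mx (fun z : int => z%:~R) v.
Definition isH (A : comUnitRingType) (n : nat) (v : 'cV[int]_n.+1) (S : A -> Prop)
  (g : 'M[A]_n.+1) := isSO S g /\ g *m vA A v = vA A v.

Definition primitive (n : nat) (v : 'cV[int]_n.+1) :=
  forall k : int, (forall i, (k %| v i ord0)%Z) -> `|k| = 1.

Definition dotz (n : nat) (v w : 'cV[int]_n.+1) : int := \sum_i v i ord0 * w i ord0.

(* g_v in SL_d(Z) whose first d-1 columns form a positively oriented
   Z-basis of Lambda_v = v^perp \cap Z^d *)
Definition is_gv (n : nat) (v : 'cV[int]_n.+1) (gv : 'M[int]_n.+1) :=
  [/\ \det gv = 1,
      forall j, j != ord_max -> dotz v (col j gv) = 0,
      forall w : 'cV[int]_n.+1, dotz v w = 0 ->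
        exists c : 'cV[int]_n.+1, c ord_max ord0 = 0 /\ w = gv *m c
    & 0 < \det (\matrix_(i, j) (if j == ord_max then v i ord0 else gv i j))].

Definition normv (R : realType) (n : nat) (v : 'cV[int]_n.+1) : R :=
  Num.sqrt (\sum_i ((v i ord0)%:~R) ^+ 2).

Definition av (R : realType) (n : nat) (v : 'cV[int]_n.+1) : 'M[R]_n.+1 :=
  diag_mx (\row_i (if i == ord_max then normv R v
                   else powR (normv R v) (- (n%:R)^-1))).

Definition ratM (A : unitRingType) (n : nat) (g : 'M[rat]_n.+1) : 'M[A]_n.+1 :=
  map_mx ratr g.
Definition intM (A : ringType) (n : nat) (g : 'M[int]_n.+1) : 'M[A]_n.+1 :=
  map_mx (fun z : int => z%:~R) g.

(* Elements ((g1inf, g1p), (g2inf, g2p)) of G(R x Q_p) *)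
Record GA (R : realType) (F : fieldType) (n : nat) := mkGA {
  g1i : 'M[R]_n.+1; g1p : 'M[F]_n.+1; g2i : 'M[R]_n.+1; g2p : 'M[F]_n.+1 }.

Definition inGA (R : realType) (F : fieldType) (n : nat) (x : GA R F n) :=
  inG (@anyA R) (g1i x, g2i x) /\ inG (@anyA F) (g1p x, g2p x).

Definition mulGA (R : realType) (F : fieldType) (n : nat) (x y : GA R F n) : GA R F n :=
  mkGA (g1i x *m g1i y) (g1p x *m g1p y) (g2i x *m g2i y) (g2p x *m g2p y).

(* right multiplication by the diagonal image of gamma in G(Z[1/p]) *)
Definition actGA (R : realType) (F : fieldType) (n : nat) (x : GA R F n)
  (gam : 'M[rat]_n.+1 * 'M[rat]_n.+1) : GA R F n :=
  mkGA (g1i x *m ratM R gam.1) (g1p x *m ratM F gam.1)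
       (g2i x *m ratM R gam.2) (g2p x *m ratM F gam.2).

(* Subsets of Y_p = G(R x Q_p)/G(Z[1/p]) are represented by their
   (right G(Z[1/p])-invariant) preimages in G(R x Q_p); subsets of
   G(R)/G(Z) by their (right G(Z)-invariant) preimages in G(R). *)

Section Objects.
Variables (R : realType) (F : fieldType) (nrm : F -> rat) (p n : nat).
Variables (v : 'cV[int]_n.+1) (gv : 'M[int]_n.+1) (kv : 'M[R]_n.+1).

Definition gvF : 'M[F]_n.+1 := intM F gv.
Definition conjv (h : 'M[F]_n.+1) : 'M[F]_n.+1 := invmx gvF *m h *m gvF.
Definition conjvR (h : 'M[R]_n.+1) : 'M[R]_n.+1 :=
  invmx (intM R gv) *m h *m intM R gv.

Definition Kset : set 'M[R]_n.+1 :=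
  [set k | isSO (@anyA R) k /\ k *m e_last R n = e_last R n].

(* O_{v,p} = ((k_v,e),(a_v k_v g_v,e)) L_v(R x Q_p) G(Z[1/p]) *)
Definition Ovp : set (GA R F n) :=
  [set x | exists (hi : 'M[R]_n.+1) (hp : 'M[F]_n.+1) gam,
     [/\ isH v (@anyA R) hi, isH v (@anyA F) hp, inG (Zinvp p) gam &
       x = actGA (mulGA (mkGA kv 1%:M (av R v *m kv *m intM R gv) 1%:M)
                        (mkGA hi hp (conjvR hi) (conjv hp))) gam]].

(* O_{v,p,h} = (Delta K x L_v(Z_p)) ((k_v,h),(a_v k_v g_v, g_v^-1 h g_v)) G(Z[1/p]) *)
Definition Ovph (h : 'M[F]_n.+1) : set (GA R F n) :=
  [set x | exists (k : 'M[R]_n.+1) (h' : 'M[F]_n.+1) gam,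
     [/\ Kset k, isH v (Zp nrm) h', inG (Zinvp p) gam &
       x = actGA (mulGA (mkGA k h' k (conjv h'))
                        (mkGA kv h (av R v *m kv *m intM R gv) (conjv h))) gam]].

Definition qinf_img (S : set (GA R F n)) : set ('M[R]_n.+1 * 'M[R]_n.+1) :=
  [set y | exists x c1 c2 (gam del : 'M[rat]_n.+1 * 'M[rat]_n.+1),
     S x /\ isSO (Zp nrm) c1 /\ isASL (Zp nrm) c2 /\ inG (Zinvp p) gam /\
         inG Zint del /\
         g1p x = c1 *m ratM F gam.1 /\ g2p x = c2 *m ratM F gam.2 /\
         y = (g1i x *m invmx (ratM R gam.1) *m ratM R del.1,
              g2i x *m invmx (ratM R gam.2) *m ratM R del.2)].

Definition qinf_pre (T : set ('M[R]_n.+1 * 'M[R]_n.+1)) : set (GA R F n) :=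
  [set x | exists c1 c2 (gam : 'M[rat]_n.+1 * 'M[rat]_n.+1),
     inGA x /\ isSO (Zp nrm) c1 /\ isASL (Zp nrm) c2 /\ inG (Zinvp p) gam /\
         g1p x = c1 *m ratM F gam.1 /\ g2p x = c2 *m ratM F gam.2 /\
         T (g1i x *m invmx (ratM R gam.1), g2i x *m invmx (ratM R gam.2))].

Definition DKorbit (gam1 gam2 : 'M[rat]_n.+1) : set ('M[R]_n.+1 * 'M[R]_n.+1) :=
  [set y | exists k (del : 'M[rat]_n.+1 * 'M[rat]_n.+1),
     [/\ Kset k, inG Zint del &
       y = (k *m kv *m invmx (ratM R gam1) *m ratM R del.1,
            k *m (av R v *m kv *m intM R gv) *m ratM R gam2 *m ratM R del.2)]].

Definition Korbit1 (gam1 : 'M[rat]_n.+1) : set 'M[R]_n.+1 :=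
  [set y | exists k del,
     [/\ Kset k, isSO Zint del & y = k *m kv *m invmx (ratM R gam1) *m ratM R del]].

Definition is_reps (M : seq 'M[F]_n.+1) :=
  [/\ forall h, h \in M -> isH v (@anyA F) h,
      forall g, isH v (@anyA F) g -> exists h a (b : 'M[rat]_n.+1),
         [/\ h \in M, isH v (Zp nrm) a, isH v (Zinvp p) b & g = a *m h *m ratM F b]
    & forall h h', h \in M -> h' \in M ->
        (exists a (b : 'M[rat]_n.+1),
           [/\ isH v (Zp nrm) a, isH v (Zinvp p) b & h' = a *m h *m ratM F b]) ->
        h = h'].

Definition inM0 (M : seq 'M[F]_n.+1) (h : 'M[F]_n.+1) :=
  h \in M /\ exists c (gam : 'M[rat]_n.+1),
    [/\ isSO (Zp nrm) c, isSO (Zinvp p) gam & h = c *m ratM F gam].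

Definition hdecomp (h : 'M[F]_n.+1) (c1 c2 : 'M[F]_n.+1) (gam1 gam2 : 'M[rat]_n.+1) :=
  [/\ isSO (Zp nrm) c1, isASL (Zp nrm) c2, inG (Zinvp p) (gam1, gam2),
      h = c1 *m ratM F gam1 & conjv h = c2 *m invmx (ratM F gam2)].

End Objects.

From Pilot Require Import Defs.
From HB Require Import structures.
From mathcomp Require Import all_boot all_order all_algebra.
From mathcomp Require Import classical_sets reals exp.
From mathcomp Require Import ring.
Set Implicit Arguments. Unset Strict Implicit. Unset Printing Implicit Defensive.
Import Order.TTheory GRing.Theory Num.Theory.
Local Open Scope ring_scope.

(* The p-adic part of a point of O_{v,p,h} factors as a Z_p-integral matrix times
   a Z[1/p]-integral one, and two such factorizations differ by an element of
   G(Z_p) \cap G(Z[1/p]) = G(Z): this makes q_infty computable on O_{v,p,h} and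
   identifies its image with the Delta K-orbit of (k_v gamma_1^-1, a_v k_v g_v gamma_2).
   Conversely, a relation k k_v r = k' k_v x with x fixing v forces r into H_v,
   because k_v^-1 K k_v is the stabilizer of v.  A common point of two K-orbits, or
   a point of O_{v,p} above the Delta K-orbit, thus yields h' in H_v(Z_p) h H_v(Z[1/p]),
   which forces h' = h, resp. puts the point in O_{v,p,h}.  The second factor is
   handled through g_v, which conjugates H_v into ASL_{d-1} since v^T g_v = e_d^T. *)

Definition is_subring (A : comUnitRingType) (S : A -> Prop) :=
  [/\ S 1, forall x y, S x -> S y -> S (x - y) & forall x y, S x -> S y -> S (x * y)].

Definition mx_in (A : Type) (S : A -> Prop) m k (g : 'M[A]_(m, k)) := forall i j, S (g i j).

Section Subring.
Variables (A : comUnitRingType) (S : A -> Prop).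
Hypothesis subS : is_subring S.

Lemma subring1 : S 1. Proof. by case: subS. Qed.
Lemma subringB x y : S x -> S y -> S (x - y). Proof. by case: subS => _ + _; apply. Qed.
Lemma subringM x y : S x -> S y -> S (x * y). Proof. by case: subS => _ _; apply. Qed.
Lemma subring0 : S 0. Proof. by rewrite -(subrr 1); apply: subringB; apply: subring1. Qed.
Lemma subringN x : S x -> S (- x).
Proof. by move=> Sx; rewrite -sub0r; apply: subringB => //; apply: subring0. Qed.
Lemma subringD x y : S x -> S y -> S (x + y).
Proof. by move=> Sx Sy; rewrite -[y]opprK; apply: subringB => //; apply: subringN. Qed.

Lemma subring_nat k : S k%:R.
Proof.
elim: k => [|k IHk]; first exact: subring0.
by rewrite -addn1 natrD; apply: subringD => //; apply: subring1.
Qed.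

Lemma subring_int (z : int) : S z%:~R.
Proof. by case: z => k; rewrite ?NegzE ?mulrNz; [|apply: subringN]; apply: subring_nat. Qed.

Lemma subring_sign k : S ((-1) ^+ k).
Proof. by rewrite -signr_odd; case: odd; [apply/subringN/subring1 | apply: subring1]. Qed.

Lemma subring_sum (I : finType) (P : pred I) (G : I -> A) :
  (forall i, S (G i)) -> S (\sum_(i | P i) G i).
Proof. by move=> SG; apply: big_ind => //; [apply: subring0 | apply: subringD]. Qed.

Lemma subring_prod (I : finType) (P : pred I) (G : I -> A) :
  (forall i, S (G i)) -> S (\prod_(i | P i) G i).
Proof. by move=> SG; apply: big_ind => //; [apply: subring1 | apply: subringM]. Qed.

Lemma mx_in_det k (g : 'M[A]_k) : mx_in S g -> S (\det g).
Proof.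
move=> Sg; apply: subring_sum => s; apply: subringM; first exact: subring_sign.
exact: subring_prod.
Qed.

Lemma mx_in_mul m k l (a : 'M[A]_(m, k)) (b : 'M[A]_(k, l)) :
  mx_in S a -> mx_in S b -> mx_in S (a *m b).
Proof. by move=> Sa Sb i j; rewrite mxE; apply: subring_sum => t; apply: subringM. Qed.

Lemma mx_in_tr m k (a : 'M[A]_(m, k)) : mx_in S a -> mx_in S a^T.
Proof. by move=> Sa i j; rewrite mxE. Qed.

Lemma mx_in1 k : mx_in S (1%:M : 'M[A]_k).
Proof. by move=> i j; rewrite mxE; apply: subring_nat. Qed.

Lemma mx_in_intM k (g : 'M[int]_k.+1) : mx_in S (intM A g).
Proof. by move=> i j; rewrite mxE; apply: subring_int. Qed.

Lemma mx_in_adj k (g : 'M[A]_k) : mx_in S g -> mx_in S (\adj g).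
Proof.
move=> Sg i j; rewrite mxE /cofactor; apply: subringM; first exact: subring_sign.
by apply: mx_in_det => a b; rewrite !mxE.
Qed.

Lemma invmx_det1 k (g : 'M[A]_k) : \det g = 1 -> invmx g = \adj g.
Proof. by move=> dg; rewrite /invmx unitmxE dg unitr1 invr1 scale1r. Qed.

Lemma mx_in_invmx k (g : 'M[A]_k) : \det g = 1 -> mx_in S g -> mx_in S (invmx g).
Proof. by move=> dg Sg; rewrite invmx_det1 //; apply: mx_in_adj. Qed.
End Subring.

Lemma det1_unitmx (A : comUnitRingType) k (g : 'M[A]_k) : \det g = 1 -> g \in unitmx.
Proof. by move=> dg; rewrite unitmxE dg unitr1. Qed.

Definition e_row (A : nzRingType) n : 'rV[A]_n.+1 := (e_last A n)^T.

Lemma e_row_mulE (A : comUnitRingType) n (g : 'M[A]_n.+1) j :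
  (e_row A n *m g) 0 j = g ord_max j.
Proof.
rewrite mxE (bigD1 ord_max) //= big1 ?addr0; first by rewrite !mxE eqxx mul1r.
by move=> i /negbTE ni; rewrite !mxE ni mul0r.
Qed.

Lemma last_rowP (A : comUnitRingType) n (g : 'M[A]_n.+1) :
  (forall j, g ord_max j = (j == ord_max)%:R) <-> e_row A n *m g = e_row A n.
Proof.
split=> [gj | eg j]; first by apply/matrixP=> i j; rewrite ord1 e_row_mulE gj !mxE.
by rewrite -e_row_mulE eg !mxE.
Qed.

Section MatrixGroups.
Variables (A : comUnitRingType) (n : nat) (S : A -> Prop).
Hypothesis subS : is_subring S.
Implicit Types g h : 'M[A]_n.+1.

Lemma isSO_unitmx g : isSO S g -> g \in unitmx.
Proof. by case=> _ _; apply: det1_unitmx. Qed.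

Lemma isASL_unitmx g : isASL S g -> g \in unitmx.
Proof. by case=> _ _; apply: det1_unitmx. Qed.

Lemma isSO_mulmx_tr g : isSO S g -> g *m g^T = 1%:M.
Proof. by case=> _ gg _; apply: mulmx1C. Qed.

Lemma isSO_invmx g : isSO S g -> invmx g = g^T.
Proof.
move=> Sg; rewrite -[LHS]mulmx1 -(isSO_mulmx_tr Sg) mulmxA mulVmx ?mul1mx //.
exact: isSO_unitmx Sg.
Qed.

Lemma isSO1 : isSO S (1%:M : 'M[A]_n.+1).
Proof. by split; [apply: mx_in1 | rewrite trmx1 mulmx1 | rewrite det1]. Qed.

Lemma isSOM g h : isSO S g -> isSO S h -> isSO S (g *m h).
Proof.
case=> Sg gg dg [Sh hh dh]; split; first exact: mx_in_mul.
  by rewrite trmx_mul mulmxA -(mulmxA _ _ g) gg mulmx1.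
by rewrite det_mulmx dg dh mulr1.
Qed.

Lemma isSO_tr g : isSO S g -> isSO S g^T.
Proof.
move=> Sg; case: (Sg) => Sg_in _ dg; split; first exact: mx_in_tr.
  by rewrite trmxK isSO_mulmx_tr.
by rewrite det_tr.
Qed.

Lemma isSOV g : isSO S g -> isSO S (invmx g).
Proof. by move=> Sg; rewrite isSO_invmx //; apply: isSO_tr. Qed.

Lemma isASL_row g : isASL S g -> e_row A n *m g = e_row A n.
Proof. by case=> _ /last_rowP. Qed.

Lemma isASL1 : isASL S (1%:M : 'M[A]_n.+1).
Proof. by split; [apply: mx_in1 | apply/last_rowP; rewrite mulmx1 | rewrite det1]. Qed.

Lemma isASLM g h : isASL S g -> isASL S h -> isASL S (g *m h).
Proof.
move=> Sg Sh; case: (Sg) (Sh) => Sg_in _ dg [Sh_in _ dh]; split; first exact: mx_in_mul.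
  by apply/last_rowP; rewrite mulmxA !isASL_row.
by rewrite det_mulmx dg dh mulr1.
Qed.

Lemma isASLV g : isASL S g -> isASL S (invmx g).
Proof.
move=> Sg; case: (Sg) => Sg_in _ dg; split; first exact: mx_in_invmx.
  apply/last_rowP; rewrite -{1}(isASL_row Sg) mulmxK //; exact: isASL_unitmx Sg.
by rewrite det_inv dg invr1.
Qed.

Lemma inG1 : inG S (1%:M : 'M[A]_n.+1, 1%:M).
Proof. by split; [apply: isSO1 | apply: isASL1]. Qed.
End MatrixGroups.

Section ChangeSubring.
Variables (A : comUnitRingType) (n : nat) (S S' : A -> Prop).
Implicit Types g : 'M[A]_n.+1.

Lemma isSO_restrict g : isSO S g -> mx_in S' g -> isSO S' g.
Proof. by case. Qed.

Lemma isASL_restrict g : isASL S g -> mx_in S' g -> isASL S' g.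
Proof. by case. Qed.

Hypothesis subSS' : forall x, S x -> S' x.

Lemma isSO_sub g : isSO S g -> isSO S' g.
Proof. by case=> Sg *; split=> // i j; apply: subSS'. Qed.

Lemma isH_sub v g : isH v S g -> isH v S' g.
Proof. by case=> Sg gv; split=> //; apply: isSO_sub. Qed.
End ChangeSubring.

Lemma isSO_anyA (A : comUnitRingType) n (S : A -> Prop) (g : 'M[A]_n.+1) :
  isSO S g -> isSO (@anyA A) g.
Proof. exact: isSO_sub. Qed.

Lemma isH_anyA (A : comUnitRingType) n (S : A -> Prop) v (g : 'M[A]_n.+1) :
  isH v S g -> isH v (@anyA A) g.
Proof. exact: isH_sub. Qed.

Section MapMatrixGroups.
Variables (A B : comUnitRingType) (f : {rmorphism A -> B}) (n : nat).
Variables (S : A -> Prop) (S' : B -> Prop).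
Hypothesis fS : forall x, S x -> S' (f x).
Implicit Types g : 'M[A]_n.+1.

Lemma isSO_map g : isSO S g -> isSO S' (map_mx f g).
Proof.
case=> Sg gg dg; split; first by move=> i j; rewrite mxE; apply: fS.
  by rewrite map_trmx -map_mxM gg map_mx1.
by rewrite det_map_mx dg rmorph1.
Qed.

Lemma isASL_map g : isASL S g -> isASL S' (map_mx f g).
Proof.
case=> Sg gj dg; split; first by move=> i j; rewrite mxE; apply: fS.
  by move=> j; rewrite mxE gj rmorph_nat.
by rewrite det_map_mx dg rmorph1.
Qed.

Lemma vA_map (v : 'cV[int]_n.+1) : map_mx f (vA A v) = vA B v.
Proof. by apply/matrixP=> i j; rewrite !mxE rmorph_int. Qed.

Lemma intM_map (g : 'M[int]_n.+1) : map_mx f (intM A g) = intM B g.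
Proof. by apply/matrixP=> i j; rewrite !mxE rmorph_int. Qed.

Lemma isH_map v g : isH v S g -> isH v S' (map_mx f g).
Proof. by case=> Sg gv; split; [apply: isSO_map | rewrite -vA_map -map_mxM gv]. Qed.
End MapMatrixGroups.

Lemma subring_any (A : comUnitRingType) : is_subring (@anyA A).
Proof. by []. Qed.

Lemma ZintE (q : rat) : Zint q <-> q \is a Num.int.
Proof. by rewrite Qint_def /Zint; split=> [->|/eqP]. Qed.

Lemma subring_Zint : is_subring Zint.
Proof.
split; first by apply/ZintE; rewrite rpred1.
  by move=> x y /ZintE Zx /ZintE Zy; apply/ZintE; rewrite rpredB.
by move=> x y /ZintE Zx /ZintE Zy; apply/ZintE; rewrite rpredM.
Qed.

Section ZinvP.
Variable p : nat.
Hypothesis p_pr : prime p.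

Lemma ZinvpE (q : rat) : Zinvp p q <-> exists k : nat, Zint ((p ^ k)%N%:R * q).
Proof.
split=> [[k dq] | [k /ZintE /intrP [m pq]]].
  exists k; apply/ZintE.
  have -> : (p ^ k)%N%:R * q = (numq q)%:~R by rewrite numqE dq mulrC.
  exact: rpred_int.
have num_den : ((p ^ k)%N%:Z * numq q = m * denq q :> int)%R.
  by apply: (@intr_inj rat); rewrite !rmorphM /= numqE -pq mulrA.
have : (`|denq q| %| `|numq q| * p ^ k)%N.
  apply/dvdnP; exists `|m|%N.
  by rewrite mulnC -abszM -num_den abszM absz_nat mulnC.
rewrite Gauss_dvdr; last by rewrite coprime_sym coprime_num_den.
case/(dvdn_pfactor _ _ p_pr) => j _ dj; exists j.
by rewrite -dj gtz0_abs // denq_gt0.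
Qed.

Lemma subring_Zinvp : is_subring (Zinvp p).
Proof.
split; first by apply/ZinvpE; exists 0%N; rewrite mul1r; apply/ZintE; rewrite rpred1.
- move=> x y /ZinvpE [k /ZintE Zx] /ZinvpE [l /ZintE Zy].
  apply/ZinvpE; exists (k + l)%N; apply/ZintE.
  have -> : (p ^ (k + l))%N%:R * (x - y) =
    (p ^ l)%N%:R * ((p ^ k)%N%:R * x) - (p ^ k)%N%:R * ((p ^ l)%N%:R * y) :> rat.
    by rewrite expnD natrM; ring.
  by apply: rpredB; apply: rpredM => //; apply: rpred_nat.
- move=> x y /ZinvpE [k /ZintE Zx] /ZinvpE [l /ZintE Zy].
  apply/ZinvpE; exists (k + l)%N; apply/ZintE.
  by rewrite expnD natrM mulrACA; apply: rpredM.
Qed.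

Lemma Zint_Zinvp q : Zint q -> Zinvp p q.
Proof. by move=> dq; exists 0%N; rewrite dq. Qed.
End ZinvP.

Section PadicIntegers.
Variables (p : nat) (F : fieldType) (nrm : F -> rat).
Hypotheses (p_pr : prime p) (Qp_F : is_Qp p nrm).

Lemma Qp_nrm1 : nrm 1 = 1.
Proof.
have n1 : nrm 1 != 0 by apply/eqP => /(Qp_nrm_eq0 Qp_F)/eqP; rewrite oner_eq0.
by apply: (mulIf n1); rewrite -(Qp_nrmM Qp_F) !mul1r.
Qed.

Lemma Qp_nrmN x : nrm (- x) = nrm x.
Proof.
have : nrm (-1) ^+ 2 == 1 by rewrite expr2 -(Qp_nrmM Qp_F) mulrNN mulr1 Qp_nrm1.
rewrite sqrf_eq1 => /orP [/eqP nN1 | /eqP nN1].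
  by rewrite -mulN1r (Qp_nrmM Qp_F) nN1 mul1r.
by have := Qp_nrm_ge0 Qp_F (-1); rewrite nN1.
Qed.

Lemma subring_Zp : is_subring (Defs.Zp nrm).
Proof.
rewrite /Defs.Zp; split; first by rewrite Qp_nrm1.
  move=> x y x1 y1; apply: le_trans (Qp_nrmD Qp_F _ _) _.
  by rewrite ge_max x1 Qp_nrmN y1.
by move=> x y x1 y1; rewrite (Qp_nrmM Qp_F) mulr_ile1 ?(Qp_nrm_ge0 Qp_F).
Qed.

Lemma Qp_intr_neq0 (z : int) : z != 0 -> (z%:~R : F) != 0.
Proof.
move=> z0; apply/eqP => zF0; have := Qp_nrm_rat Qp_F z%:~R.
rewrite ratr_int zF0; have -> : nrm 0 = 0 by apply/(Qp_nrm_eq0 Qp_F).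
move/esym/eqP; rewrite /pabs intr_eq0 (negbTE z0) mulf_eq0 invr_eq0 !expf_eq0 /=.
by rewrite pnatr_eq0 eqn0Ngt (prime_gt0 p_pr) /= !andbF.
Qed.

(* |q|_p = p ^ (logn p (denq q)), which exceeds 1 unless denq q = 1. *)
Lemma Zp_Zinvp_Zint q : Defs.Zp nrm (ratr q) -> Zinvp p q -> Zint q.
Proof.
rewrite /Defs.Zp (Qp_nrm_rat Qp_F) => q1 [[|k] dq]; first by rewrite /Zint dq.
have p1 : (1 < p)%N by apply: prime_gt1.
have q0 : q != 0.
  apply: contra_eqN dq => /eqP ->; rewrite (_ : denq 0 = 1%N%:Z) // eqz_nat eq_sym expnS muln_eq1.
  by rewrite negb_and neq_ltn p1 orbT.
move: q1; rewrite /pabs (negbTE q0) dq absz_nat pfactorK // logn_coprime; last first.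
  by have := coprime_num_den q; rewrite dq absz_nat coprime_pexpr // coprime_sym.
by rewrite expr0 divr1 leNgt exprn_egt1 ?ltr1n.
Qed.

Lemma Zint_Zp q : Zint q -> Defs.Zp nrm (ratr q).
Proof. by move=> dq; rewrite /ratr dq divr1; apply: subring_int subring_Zp _. Qed.
End PadicIntegers.

(* The library equips ratr with a morphism structure only over numFieldType. *)
Section RatrCharZero.
Variable F : fieldType.
Hypothesis F_char0 : forall z : int, z != 0 -> (z%:~R : F) != 0.

Lemma ratr_frac (a b : int) : b != 0 -> ratr (a%:~R / b%:~R) = a%:~R / b%:~R :> F.
Proof.
move=> b0; set q := a%:~R / b%:~R.
have num_den : numq q * b = a * denq q.
  apply: (@intr_inj rat); rewrite !rmorphM /= numqE /q.
  by field; rewrite intr_eq0.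
rewrite /ratr; apply/eqP; rewrite eqr_div ?F_char0 ?denq_neq0 //.
by rewrite -!rmorphM num_den.
Qed.

Fact ratr_zmod_char0 : zmod_morphism (@ratr F).
Proof.
move=> x y; have dx := denq_neq0 x; have dy := denq_neq0 y.
have -> : x - y = (numq x * denq y - numq y * denq x)%:~R / (denq x * denq y)%:~R.
  rewrite -{1}[x]divq_num_den -{1}[y]divq_num_den rmorphB !rmorphM /=.
  by field; rewrite !intr_eq0 dx dy.
rewrite ratr_frac ?mulf_neq0 // /ratr rmorphB !rmorphM /=.
by field; rewrite !F_char0.
Qed.

Fact ratr_monoid_char0 : monoid_morphism (@ratr F).
Proof.
split=> [|x y]; first by rewrite /ratr divr1.
have dx := denq_neq0 x; have dy := denq_neq0 y.
have -> : x * y = (numq x * numq y)%:~R / (denq x * denq y)%:~R.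
  rewrite -{1}[x]divq_num_den -{1}[y]divq_num_den !rmorphM /=.
  by field; rewrite !intr_eq0 dx dy.
rewrite ratr_frac ?mulf_neq0 // /ratr !rmorphM /=.
by field; rewrite !F_char0.
Qed.

Definition ratr_char0 : {rmorphism rat -> F} :=
  HB.pack (@ratr F) (GRing.isZmodMorphism.Build _ _ _ ratr_zmod_char0)
                    (GRing.isMonoidMorphism.Build _ _ _ ratr_monoid_char0).
End RatrCharZero.

Section LatticeBasis.
Variables (n : nat) (v : 'cV[int]_n.+1) (gv : 'M[int]_n.+1).
Hypotheses (v_prim : primitive v) (gv_basis : is_gv v gv).

Lemma primitive_neq0 : exists i, v i 0 != 0.
Proof.
apply/existsP; apply: contraT; rewrite negb_exists => /forallP v0.
suff : `|2%:Z| = 1 by [].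
by apply: v_prim => i; move: (v0 i); rewrite negbK => /eqP ->; rewrite dvdz0.
Qed.

Lemma gv_unitmx : gv \in unitmx.
Proof. by case: gv_basis => dg _ _ _; apply: det1_unitmx. Qed.

Lemma trv_gv_scale : v^T *m gv = (v^T *m gv) 0 ord_max *: e_row int n.
Proof.
case: gv_basis => _ v_orth _ _; apply/matrixP => i j; rewrite ord1 [RHS]mxE.
rewrite [e_row _ _ _ _]mxE [e_last _ _ _ _]mxE.
have [->|jn] := eqVneq j ord_max; first by rewrite mulr1.
rewrite mulr0 -(v_orth j jn) /dotz mxE.
by apply: eq_bigr => k _; rewrite !mxE.
Qed.

Lemma last_row_invgv c : v^T *m gv = c *: e_row int n ->
  `|c| = 1 /\ e_row int n *m invmx gv = c *: v^T.
Proof.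
move=> vg; have vT : v^T = c *: (e_row int n *m invmx gv).
  by rewrite scalemxAl -vg mulmxK ?gv_unitmx.
have c1 : `|c| = 1.
  by apply: v_prim => i; move/matrixP: vT => /(_ 0 i); rewrite !mxE => ->; apply: dvdz_mulr.
split=> //; rewrite vT scalerA -expr2 -(real_normK (num_real c)) c1 expr1n.
by rewrite scale1r.
Qed.

Lemma det_replace_last_col c : e_row int n *m invmx gv = c *: v^T ->
  \det (\matrix_(i, j) (if j == ord_max then v i ord0 else gv i j)) =
  c * \sum_i v i 0 ^+ 2.
Proof.
case: gv_basis => dg _ _ _ gvinv.
rewrite (expand_det_col _ ord_max) mulr_sumr; apply: eq_bigr => i _.
have -> : cofactor (\matrix_(i, j) (if j == ord_max then v i ord0 else gv i j)) i ord_max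
          = cofactor gv i ord_max.
  rewrite /cofactor; congr (_ * \det _); apply/matrixP => a b; rewrite !mxE.
  by rewrite [lift _ _ == _]eq_sym (negbTE (neq_lift _ _)).
have -> : cofactor gv i ord_max = (e_row int n *m invmx gv) 0 i.
  by rewrite e_row_mulE invmx_det1 // mxE.
by rewrite gvinv !mxE eqxx mulrCA expr2.
Qed.

Lemma trv_gv : v^T *m gv = e_row int n.
Proof.
have vg := trv_gv_scale; set c := (v^T *m gv) 0 ord_max in vg.
have [c1 gvinv] := last_row_invgv vg.
case: gv_basis => _ _ _; rewrite (det_replace_last_col gvinv) => det_pos.
suff c_1 : c = 1 by rewrite vg c_1 scale1r.
have sq_ge0 : 0 <= \sum_i v i 0 ^+ 2 :> int by apply: sumr_ge0 => i _; apply: sqr_ge0.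
have [c_ge0|c_lt0] := lerP 0 c; first by rewrite -c1 ger0_norm.
by have := mulr_le0_ge0 (ltW c_lt0) sq_ge0; rewrite leNgt det_pos.
Qed.
End LatticeBasis.

Section ConjugateStabilizer.
Variables (A : comUnitRingType) (n : nat) (v : 'cV[int]_n.+1) (gv : 'M[int]_n.+1).
Hypotheses (v_prim : primitive v) (gv_basis : is_gv v gv).

Lemma det_intM_gv : \det (intM A gv) = 1.
Proof. by case: gv_basis => dg _ _ _; rewrite det_map_mx dg rmorph1. Qed.

Lemma intM_gv_unitmx : intM A gv \in unitmx.
Proof. exact/det1_unitmx/det_intM_gv. Qed.

Lemma trvA_gv : (vA A v)^T *m intM A gv = e_row A n.
Proof.
have := congr1 (map_mx (intr : int -> A)) (trv_gv v_prim gv_basis).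
rewrite map_mxM map_trmx => ->.
by apply/matrixP => i j; rewrite !mxE rmorph_nat.
Qed.

(* e_d^T gv^-1 = v^T, and v^T g = v^T since g is orthogonal and fixes v. *)
Lemma conj_isH_isASL (S : A -> Prop) (g : 'M[A]_n.+1) : is_subring S ->
  isH v S g -> isASL S (invmx (intM A gv) *m g *m intM A gv).
Proof.
move=> subS [[Sg gTg dg] gv_fix]; split.
- apply: mx_in_mul (mx_in_intM _ _) => //; apply: mx_in_mul Sg => //.
  by apply: mx_in_invmx (mx_in_intM _ _) => //; apply: det_intM_gv.
- have vTg : (vA A v)^T *m g = (vA A v)^T.
    by apply: trmx_inj; rewrite trmx_mul trmxK -{1}gv_fix mulmxA gTg mul1mx.
  apply/last_rowP; rewrite !mulmxA -trvA_gv mulmxK ?intM_gv_unitmx //.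
  by rewrite vTg trvA_gv.
- by rewrite !det_mulmx det_inv det_intM_gv invr1 mul1r mulr1 dg.
Qed.
End ConjugateStabilizer.

Section DiagonalAv.
Variables (R : realType) (n : nat) (v : 'cV[int]_n.+1) (gv : 'M[int]_n.+1) (kv : 'M[R]_n.+1).
Hypotheses (n_gt0 : (0 < n)%N) (v_prim : primitive v) (gv_basis : is_gv v gv).
Hypotheses (kv_SO : isSO (@anyA R) kv) (kv_v : kv *m vA R v = normv R v *: e_last R n).

Let e := e_last R n.
Let nv := normv R v.
Let lam := powR nv (- (n%:R)^-1).

Lemma normv_gt0 : 0 < nv.
Proof.
have [i vi] := primitive_neq0 v_prim.
rewrite lt_def sqrtr_ge0 andbT; apply: contra vi => /eqP nv0.
have : vA R v = 0.
  have [_ kvTkv _] := kv_SO.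
  by rewrite -[vA R v]mul1mx -kvTkv -mulmxA kv_v -/nv nv0 scale0r mulmx0.
by move/matrixP/(_ i 0); rewrite !mxE => /eqP; rewrite intr_eq0.
Qed.

Lemma e_row_kv : e_row R n *m kv = nv^-1 *: (vA R v)^T.
Proof.
have -> : (vA R v)^T = nv *: (e_row R n *m kv).
  rewrite scalemxAl /e_row -linearZ /= -/e -/nv -kv_v trmx_mul -mulmxA.
  by case: kv_SO => _ -> _; rewrite mulmx1.
by rewrite scalerA mulVf ?scale1r // lt0r_neq0 // normv_gt0.
Qed.

Lemma e_row_e : e_row R n *m e = 1%:M.
Proof.
apply/matrixP => i j; rewrite !ord1 mxE (bigD1 ord_max) //= big1 ?addr0.
  by rewrite !mxE eqxx mulr1.
by move=> k /negbTE kn; rewrite !mxE kn mul0r.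
Qed.

Lemma av_rank_one : av R v = lam%:M + (nv - lam) *: (e *m e_row R n).
Proof.
apply/matrixP => i j; rewrite !mxE (bigD1 ord0) //= big1 ?addr0 => [|k]; last by rewrite ord1.
rewrite !mxE -/nv -/lam.
have [<-|ij] := eqVneq i j.
  rewrite !mulr1n; case: (i == ord_max) => /=; last by rewrite mul0r mulr0 addr0.
  by rewrite !mulr1 addrC subrK.
rewrite !mulr0n add0r.
have : ~~ ((i == ord_max) && (j == ord_max)) by apply: contra ij => /andP[/eqP -> /eqP ->].
by case: (i == ord_max); case: (j == ord_max) => //= _; rewrite ?mul0r ?mulr0.
Qed.

Lemma Kset_e_row k : Kset k -> e_row R n *m k = e_row R n.
Proof.
case=> [[_ kTk _] ke]; apply: trmx_inj.
by rewrite trmx_mul !trmxK -{1}ke mulmxA kTk mul1mx.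
Qed.

Lemma Kset_av k : Kset k -> k *m av R v = av R v *m k.
Proof.
move=> Kk; have ke : k *m e = e by case: Kk.
rewrite av_rank_one mulmxDr mulmxDl -scalemxAr -scalemxAl.
by rewrite mul_mx_scalar mul_scalar_mx mulmxA ke -mulmxA Kset_e_row.
Qed.

Lemma e_row_av : e_row R n *m av R v = nv *: e_row R n.
Proof.
rewrite av_rank_one mulmxDr mul_mx_scalar -scalemxAr mulmxA e_row_e mul1mx.
by rewrite -scalerDl addrC subrK.
Qed.

Lemma det_av : \det (av R v) = 1.
Proof.
rewrite /av det_diag big_ord_recr /= !mxE eqxx -/nv.
have -> : \prod_(i < n) (\row_i0 (if i0 == ord_max then nv else lam)) 0
            (widen_ord (leqnSn n) i) = lam ^+ n.
  rewrite -[in RHS](card_ord n) -prodr_const; apply: eq_bigr => i _.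
  rewrite mxE ifF //; apply/negbTE/eqP => /(congr1 val) /= iE.
  by have := ltn_ord i; rewrite iE ltnn.
rewrite -powR_mulrn ?powR_ge0 // -powRrM mulNr mulVf ?pnatr_eq0 -?lt0n //.
by rewrite powR_inv1 ?mulVf ?lt0r_neq0 ?ltW ?normv_gt0.
Qed.

Lemma isASL_K_av k : Kset k -> isASL (@anyA R) (k *m (av R v *m kv *m intM R gv)).
Proof.
move=> Kk; split => //.
  apply/last_rowP; rewrite !mulmxA Kset_e_row // e_row_av -!scalemxAl e_row_kv.
  rewrite -scalemxAl scalerA mulfV ?scale1r ?(trvA_gv _ v_prim gv_basis) //.
  by rewrite lt0r_neq0 // normv_gt0.
case: Kk => [[_ _ dk] _].
have [_ _ dkv] := kv_SO.
by rewrite !det_mulmx dk det_av dkv (det_intM_gv _ gv_basis) !mul1r.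
Qed.
End DiagonalAv.

Local Open Scope classical_set_scope.

Section RationalMatrices.
Variables (A : comUnitRingType) (f : {rmorphism rat -> A}) (n : nat).
Implicit Types g h : 'M[rat]_n.+1.

Lemma ratM_map g : ratM A g = map_mx f g.
Proof. by apply/matrixP => i j; rewrite !mxE fmorph_eq_rat. Qed.

Lemma ratMM g h : ratM A (g *m h) = ratM A g *m ratM A h.
Proof. by rewrite !ratM_map map_mxM. Qed.

Lemma ratMV g : ratM A (invmx g) = invmx (ratM A g).
Proof. by rewrite !ratM_map map_invmx. Qed.

Lemma ratM1 : ratM A 1%:M = 1%:M :> 'M_n.+1.
Proof. by rewrite ratM_map map_mx1. Qed.

Lemma ratM_intM (g : 'M[int]_n.+1) : ratM A (intM rat g) = intM A g.
Proof. by rewrite ratM_map intM_map. Qed.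

Lemma isSO_ratM (S : rat -> Prop) g : isSO S g -> isSO (@anyA A) (ratM A g).
Proof. by rewrite ratM_map; apply: isSO_map. Qed.

Lemma isASL_ratM (S : rat -> Prop) g : isASL S g -> isASL (@anyA A) (ratM A g).
Proof. by rewrite ratM_map; apply: isASL_map. Qed.
End RationalMatrices.

Section Orbits.
Variables (R : realType) (F : fieldType) (nrm : F -> rat) (p n : nat).
Variables (v : 'cV[int]_n.+1) (gv : 'M[int]_n.+1) (kv : 'M[R]_n.+1).
Hypotheses (n_gt0 : (0 < n)%N) (p_pr : prime p) (Qp_F : is_Qp p nrm).
Hypotheses (v_prim : primitive v) (gv_basis : is_gv v gv).
Hypotheses (kv_SO : isSO (@anyA R) kv) (kv_v : kv *m vA R v = normv R v *: e_last R n).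

Let ZpF := Defs.Zp nrm.
Let subZp : is_subring ZpF := subring_Zp Qp_F.
Let subZinvp : is_subring (Zinvp p) := subring_Zinvp p_pr.
Let ratF : {rmorphism rat -> F} := ratr_char0 (Qp_intr_neq0 p_pr Qp_F).
Let ratR : {rmorphism rat -> R} := ratr.
Let Av := av R v *m kv *m intM R gv.

Implicit Types (g : 'M[rat]_n.+1) (c h : 'M[F]_n.+1).

Lemma mx_in_Zint_ratM g : mx_in (Zinvp p) g -> mx_in ZpF (ratM F g) -> mx_in Zint g.
Proof.
move=> Sg Sg' i j; apply: (Zp_Zinvp_Zint p_pr Qp_F) (Sg i j).
by have := Sg' i j; rewrite mxE.
Qed.

Lemma decomp_mx_in_Zint c c' g g' : \det c = 1 -> mx_in ZpF c -> mx_in ZpF c' ->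
  mx_in (Zinvp p) (g *m invmx g') -> ratM F g' \in unitmx ->
  c *m ratM F g = c' *m ratM F g' -> mx_in Zint (g *m invmx g').
Proof.
move=> dc Sc Sc' Sgg' Ug' cg; apply: mx_in_Zint_ratM => //.
have -> : ratM F (g *m invmx g') = invmx c *m c'.
  rewrite (ratMM ratF) (ratMV ratF) -(mulKmx (det1_unitmx dc) (ratM F g)) cg.
  by rewrite !mulmxA mulmxK.
by apply: mx_in_mul (mx_in_invmx subZp dc Sc) Sc'.
Qed.

Lemma isSO_decomp_Zint c c' g g' : isSO ZpF c -> isSO ZpF c' ->
  isSO (Zinvp p) g -> isSO (Zinvp p) g' ->
  c *m ratM F g = c' *m ratM F g' -> isSO Zint (g *m invmx g').
Proof.
move=> Sc Sc' Sg Sg' cg; have Sgg' := isSOM subZinvp Sg (isSOV Sg').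
case: (Sc) (Sc') (Sgg') => [Sc1 _ dc] [Sc1' _ _] [Sgg1 _ _].
apply: isSO_restrict Sgg' (decomp_mx_in_Zint dc Sc1 Sc1' Sgg1 _ cg).
exact: isSO_unitmx (isSO_ratM ratF Sg').
Qed.

Lemma isASL_decomp_Zint c c' g g' : isASL ZpF c -> isASL ZpF c' ->
  isASL (Zinvp p) g -> isASL (Zinvp p) g' ->
  c *m ratM F g = c' *m ratM F g' -> isASL Zint (g *m invmx g').
Proof.
move=> Sc Sc' Sg Sg' cg; have Sgg' := isASLM subZinvp Sg (isASLV subZinvp Sg').
case: (Sc) (Sc') (Sgg') => [Sc1 _ dc] [Sc1' _ _] [Sgg1 _ _].
apply: isASL_restrict Sgg' (decomp_mx_in_Zint dc Sc1 Sc1' Sgg1 _ cg).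
exact: isASL_unitmx (isASL_ratM ratF Sg').
Qed.

Lemma isSO_Zint_Zp g : isSO Zint g -> isSO ZpF (ratM F g).
Proof. by rewrite (ratM_map ratF); apply: isSO_map => x; apply: Zint_Zp Qp_F x. Qed.

Lemma conjvM h h' : conjv gv (h *m h') = conjv gv h *m conjv gv h'.
Proof. by rewrite /conjv !mulmxA mulmxK // (intM_gv_unitmx F gv_basis). Qed.

Lemma ratM_conjv g :
  ratM F (invmx (intM rat gv) *m g *m intM rat gv) = conjv gv (ratM F g).
Proof. by rewrite !(ratMM ratF) (ratMV ratF) (ratM_intM ratF). Qed.

Lemma ratM_conjvR g :
  ratM R (invmx (intM rat gv) *m g *m intM rat gv) = conjvR gv (ratM R g).
Proof. by rewrite !(ratMM ratR) (ratMV ratR) (ratM_intM ratR). Qed.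

Definition Ovph_point h k h' gam0 : GA R F n :=
  actGA (mulGA (mkGA k h' k (conjv gv h')) (mkGA kv h Av (conjv gv h))) gam0.

Definition Ovp_point hi hp gam0 : GA R F n :=
  actGA (mulGA (mkGA kv 1%:M Av 1%:M) (mkGA hi hp (conjvR gv hi) (conjv gv hp))) gam0.

Lemma Ovph_point_qinf h c1 c2 g1 g2 k h' gam0 : hdecomp nrm p gv h c1 c2 g1 g2 ->
  isH v ZpF h' -> inG (Zinvp p) gam0 ->
  let x := Ovph_point h k h' gam0 in
  exists c1' c2' gam, [/\ isSO ZpF c1', isASL ZpF c2', inG (Zinvp p) gam,
    (g1p x, g2p x) = (c1' *m ratM F gam.1, c2' *m ratM F gam.2) &
    (g1i x *m invmx (ratM R gam.1), g2i x *m invmx (ratM R gam.2)) =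
    (k *m kv *m invmx (ratM R g1), k *m Av *m ratM R g2)].
Proof.
move=> [Sc1 Sc2 [/= Sg1 Sg2] hE hE'] [Sh' h'v] [/= Sg01 Sg02] /=.
have U1 : ratM R (g1 *m gam0.1) \in unitmx.
  by apply: isSO_unitmx (isSO_ratM ratR (isSOM subZinvp Sg1 Sg01)).
have U2 : ratM R (invmx g2 *m gam0.2) \in unitmx.
  by apply: isASL_unitmx (isASL_ratM ratR (isASLM subZinvp (isASLV subZinvp Sg2) Sg02)).
exists (h' *m c1), (conjv gv h' *m c2), (g1 *m gam0.1, invmx g2 *m gam0.2); split => /=.
- exact (isSOM subZp Sh' Sc1).
- exact (isASLM subZp (conj_isH_isASL v_prim gv_basis subZp (conj Sh' h'v)) Sc2).
- by split; [apply: isSOM | apply: isASLM => //; apply: isASLV].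
- by rewrite hE' hE !(ratMM ratF) (ratMV ratF) !mulmxA.
congr pair; apply: (canLR (mulmxK _)) => //.
  rewrite (ratMM ratR) !mulmxA mulmxKV //.
  by apply: isSO_unitmx (isSO_ratM ratR Sg1).
have U2' := isASL_unitmx (isASL_ratM ratR Sg2).
by rewrite (ratMM ratR) (ratMV ratR) !mulmxA mulmxK.
Qed.

Lemma H1_Zp : isH v ZpF 1%:M.
Proof. by split; [apply: isSO1 | rewrite mul1mx]. Qed.

Lemma qinf_img_Ovph h c1 c2 g1 g2 : hdecomp nrm p gv h c1 c2 g1 g2 ->
  qinf_img nrm p (Ovph nrm p v gv kv h) = DKorbit v gv kv g1 g2.
Proof.
move=> hd; apply/seteqP; split=> y /=.
- case=> _ [c1' [c2' [gam [del [[k [h' [gam0 [Kk Sh' Sgam0 ->]]]]]]]]].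
  case=> Sc1' [Sc2' [[Sgam1 Sgam2] [[Sdel1 Sdel2] [E1 [E2 ->]]]]].
  have [d1 [d2 [gam' [Sd1 Sd2 [Sg1 Sg2] [= E1' E2'] [= R1 R2]]]]] :=
    Ovph_point_qinf k hd Sh' Sgam0.
  exists k, (gam'.1 *m invmx gam.1 *m del.1, gam'.2 *m invmx gam.2 *m del.2).
  split=> //; first split.
  + refine (isSOM subring_Zint _ Sdel1).
    by apply: isSO_decomp_Zint Sd1 Sc1' Sg1 Sgam1 _; rewrite -E1' -E1.
  + refine (isASLM subring_Zint _ Sdel2).
    by apply: isASL_decomp_Zint Sd2 Sc2' Sg2 Sgam2 _; rewrite -E2' -E2.
  + have U1 := isSO_unitmx (isSO_ratM ratR Sg1).
    have U2 := isASL_unitmx (isASL_ratM ratR Sg2).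
    by rewrite /= -R1 -R2 !(ratMM ratR) !(ratMV ratR) !mulmxA !mulmxKV.
- case=> k [del [Kk Sdel ->]].
  have [c1' [c2' [gam [Sc1' Sc2' Sgam [= E1 E2] [= R1 R2]]]]] :=
    Ovph_point_qinf k hd H1_Zp (inG1 n subZinvp).
  exists (Ovph_point h k 1%:M (1%:M, 1%:M)), c1', c2', gam, del.
  split; last by do !split=> //; rewrite ?E1 ?E2 ?R1 ?R2.
  by exists k, 1%:M, (1%:M, 1%:M); split=> //; [apply: H1_Zp | apply: (inG1 n subZinvp)].
Qed.

Lemma Kset1 : Kset (1%:M : 'M[R]_n.+1).
Proof. by split; [apply: isSO1 | rewrite mul1mx]. Qed.

Lemma Kset_tr_e k : Kset k -> k^T *m e_last R n = e_last R n.
Proof. by case=> [[_ kTk _] ke]; rewrite -{1}ke mulmxA kTk mul1mx. Qed.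

(* k_v^-1 K k_v is the stabilizer of v in SO_d(R), since k_v v = |v| e_d. *)
Lemma isH_of_K_rel r k k' X : Kset k -> Kset k' -> X *m vA R v = vA R v ->
  isSO (Zinvp p) r -> k *m kv *m ratM R r = k' *m kv *m X -> isH v (Zinvp p) r.
Proof.
move=> Kk Kk' Xv Sr kr; split=> //; apply: (map_mx_inj (f := ratR)).
rewrite map_mxM (vA_map ratR) -(ratM_map ratR).
have [[_ kTk _] _] := Kk; have [_ kvTkv _] := kv_SO.
have -> : ratM R r = kv^T *m k^T *m (k' *m kv *m X).
  by rewrite -kr !mulmxA -(mulmxA _ k^T) kTk mulmx1 kvTkv mul1mx.
rewrite -!mulmxA Xv kv_v -!scalemxAr (proj2 Kk') (Kset_tr_e Kk) scalemxAr -kv_v.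
by rewrite mulmxA kvTkv mul1mx.
Qed.

Lemma isH_of_coset a h h2 r : isSO ZpF a -> isH v (@anyA F) h -> isH v (@anyA F) h2 ->
  isH v (Zinvp p) r -> h2 = a *m h *m ratM F r -> isH v ZpF a.
Proof.
move=> Sa [Sh hv] [_ h2v] Hr h2E; split=> //.
have [Sr rv] := isH_map (f := ratF) (fun _ _ => I : anyA _) Hr.
rewrite -(ratM_map ratF) in Sr rv.
have [Uh Ur] := (isSO_unitmx Sh, isSO_unitmx Sr).
have -> : a = h2 *m invmx (ratM F r) *m invmx h by rewrite h2E !mulmxK.
by rewrite -!mulmxA -{1}hv mulKmx // -{1}rv mulKmx.
Qed.

Lemma Korbit1_meet_coset h h' c1 c2 g1 g2 c1' c2' g1' g2' y :
  isH v (@anyA F) h -> isH v (@anyA F) h' ->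
  hdecomp nrm p gv h c1 c2 g1 g2 -> hdecomp nrm p gv h' c1' c2' g1' g2' ->
  Korbit1 kv g1 y -> Korbit1 kv g1' y ->
  exists a r, [/\ isH v ZpF a, isH v (Zinvp p) r & h' = a *m h *m ratM F r].
Proof.
move=> Hh Hh' [Sc1 _ [/= Sg1 _] hE _] [Sc1' _ [/= Sg1' _] h'E _].
move=> [k [d [Kk Sd ->]]] [k' [d' [Kk' Sd' yE]]].
have SdZ := isSO_sub (@Zint_Zinvp p) Sd; have Sd'Z := isSO_sub (@Zint_Zinvp p) Sd'.
set r := invmx g1 *m d *m invmx d' *m g1'.
have Sr : isSO (Zinvp p) r.
  exact (isSOM subZinvp (isSOM subZinvp (isSOM subZinvp (isSOV Sg1) SdZ) (isSOV Sd'Z))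
               Sg1').
have [URd' URg1'] := (isSO_unitmx (isSO_ratM ratR Sd'), isSO_unitmx (isSO_ratM ratR Sg1')).
have kr : k *m kv *m ratM R r = k' *m kv *m 1%:M.
  by rewrite !(ratMM ratR) !(ratMV ratR) !mulmxA yE mulmxK // mulmxKV // mulmx1.
have Hr := isH_of_K_rel Kk Kk' (mul1mx _) Sr kr.
set a := c1' *m ratM F d' *m invmx (ratM F d) *m invmx c1.
have Sa : isSO ZpF a.
  have SdZp := isSO_Zint_Zp Sd; have Sd'Zp := isSO_Zint_Zp Sd'.
  exact (isSOM subZp (isSOM subZp (isSOM subZp Sc1' Sd'Zp) (isSOV SdZp)) (isSOV Sc1)).
have h'_coset : h' = a *m h *m ratM F r.
  have [Uc1 Ud] := (isSO_unitmx Sc1, isSO_unitmx (isSO_ratM ratF Sd)).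
  have [Ug1 Ud'] := (isSO_unitmx (isSO_ratM ratF Sg1), isSO_unitmx (isSO_ratM ratF Sd')).
  rewrite h'E hE !(ratMM ratF) !(ratMV ratF) !mulmxA.
  by rewrite mulmxKV // mulmxK // mulmxKV // mulmxK.
by exists a, r; split=> //; exact (isH_of_coset Sa Hh Hh' Hr h'_coset).
Qed.

Lemma Korbit1_disjoint M h h' c1 c2 g1 g2 c1' c2' g1' g2' : is_reps nrm p v M ->
  inM0 nrm p M h -> inM0 nrm p M h' -> h <> h' ->
  hdecomp nrm p gv h c1 c2 g1 g2 -> hdecomp nrm p gv h' c1' c2' g1' g2' ->
  Korbit1 kv g1 `&` Korbit1 kv g1' = set0.
Proof.
move=> [Mv _ Muniq] [hM _] [h'M _] hh' hd hd'; apply/seteqP; split=> // y [y1 y2].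
by apply/hh'/Muniq => //; apply: Korbit1_meet_coset (Mv _ hM) (Mv _ h'M) hd hd' y1 y2.
Qed.

Lemma DKorbit_disjoint g1 g2 g1' g2' : Korbit1 kv g1 `&` Korbit1 kv g1' = set0 ->
  DKorbit v gv kv g1 g2 `&` DKorbit v gv kv g1' g2' = set0.
Proof.
move=> K0; apply/seteqP; split=> // y [[k [d [Kk [Sd _] ->]]] [k' [d' [Kk' [Sd' _] yE]]]].
suff : (Korbit1 kv g1 `&` Korbit1 kv g1') (k *m kv *m invmx (ratM R g1) *m ratM R d.1).
  by rewrite K0.
by split; [exists k, d.1 | exists k', d'.1; split=> //; exact: (congr1 fst yE)].
Qed.
Lemma qinf_img_Ovph_disjoint h h' c1 c2 g1 g2 c1' c2' g1' g2' :
  hdecomp nrm p gv h c1 c2 g1 g2 -> hdecomp nrm p gv h' c1' c2' g1' g2' ->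
  Korbit1 kv g1 `&` Korbit1 kv g1' = set0 ->
  qinf_img nrm p (Ovph nrm p v gv kv h) `&` qinf_img nrm p (Ovph nrm p v gv kv h') = set0.
Proof.
by move=> hd hd' K0; rewrite (qinf_img_Ovph hd) (qinf_img_Ovph hd'); apply: DKorbit_disjoint.
Qed.

Lemma Ovph_point_inGA h k h' gam0 : isH v (@anyA F) h -> Kset k -> isH v ZpF h' ->
  inG (Zinvp p) gam0 -> inGA (Ovph_point h k h' gam0).
Proof.
move=> Hh Kk Hh' [Sg01 Sg02]; have [Sk _] := Kk.
have Hh'F := isH_anyA Hh'.
have [anyR anyF] := (subring_any R, subring_any F).
split; split=> /=.
- exact (isSOM anyR (isSOM anyR Sk kv_SO) (isSO_ratM ratR Sg01)).
- exact (isASLM anyR (isASL_K_av n_gt0 v_prim gv_basis kv_SO kv_v Kk)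
                (isASL_ratM ratR Sg02)).
- exact (isSOM anyF (isSOM anyF (proj1 Hh'F) (proj1 Hh)) (isSO_ratM ratF Sg01)).
- exact (isASLM anyF (isASLM anyF (conj_isH_isASL v_prim gv_basis anyF Hh'F)
                                 (conj_isH_isASL v_prim gv_basis anyF Hh))
                (isASL_ratM ratF Sg02)).
Qed.

Lemma Kset_conj_kv k : Kset k -> isH v (@anyA R) (kv^T *m k *m kv).
Proof.
move=> Kk; have anyR := subring_any R; split.
  exact (isSOM anyR (isSOM anyR (isSO_tr kv_SO) (proj1 Kk)) kv_SO).
have [_ kvTkv _] := kv_SO.
by rewrite -!mulmxA kv_v -!scalemxAr (proj2 Kk) scalemxAr -kv_v mulmxA kvTkv mul1mx.
Qed.

Lemma Ovph_point_in_Ovp h k h' gam0 : isH v (@anyA F) h -> Kset k -> isH v ZpF h' ->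
  inG (Zinvp p) gam0 -> Ovp p v gv kv (Ovph_point h k h' gam0).
Proof.
move=> [Sh hv] Kk [Sh' h'v] Sg0; have [[_ kTk _] _] := Kk.
have kvkvT := isSO_mulmx_tr kv_SO; have UgvR := intM_gv_unitmx R gv_basis.
exists (kv^T *m k *m kv), (h' *m h), gam0; split=> //.
- exact: Kset_conj_kv.
- split; last by rewrite -mulmxA hv h'v.
  exact (isSOM (subring_any F) (isSO_anyA Sh') Sh).
rewrite /Ovph_point /actGA /mulGA /Av /=; congr mkGA.
- by rewrite !mulmxA kvkvT mul1mx.
- by rewrite mul1mx.
- rewrite /conjvR !mulmxA mulmxK // -(mulmxA (av R v) kv) kvkvT mulmx1.
  by rewrite (Kset_av v Kk).
- by rewrite mul1mx conjvM.
Qed.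

Lemma Ovp_point_in_Ovph h hi hp gam0 k a r : Kset k -> isH v ZpF a ->
  isH v (Zinvp p) r -> inG (Zinvp p) gam0 ->
  k *m kv *m ratM R r = kv *m hi -> hp = a *m h *m ratM F r ->
  Ovph nrm p v gv kv h (Ovp_point hi hp gam0).
Proof.
move=> Kk Ha Hr [Sg01 Sg02] kr hpE.
have UgvR := intM_gv_unitmx R gv_basis.
exists k, a, (r *m gam0.1, invmx (intM rat gv) *m r *m intM rat gv *m gam0.2).
split=> //.
  split; first exact (isSOM subZinvp (proj1 Hr) Sg01).
  exact (isASLM subZinvp (conj_isH_isASL v_prim gv_basis subZinvp Hr) Sg02).
have akr : av R v *m k *m kv *m ratM R r = av R v *m kv *m hi.
  by rewrite -!mulmxA (mulmxA k) kr.
rewrite /Ovp_point /actGA /mulGA /Av /=; congr mkGA.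
- by rewrite (ratMM ratR) !mulmxA kr.
- by rewrite mul1mx hpE (ratMM ratF) !mulmxA.
- rewrite (ratMM ratR) ratM_conjvR /conjvR !mulmxA !mulmxK //.
  by rewrite (Kset_av v Kk) akr.
- by rewrite mul1mx hpE !conjvM (ratMM ratF) ratM_conjv !mulmxA.
Qed.

Lemma qinf_pre_Ovp_sub_Ovph h c1 c2 g1 g2 : isH v (@anyA F) h ->
  hdecomp nrm p gv h c1 c2 g1 g2 ->
  qinf_pre nrm p (DKorbit v gv kv g1 g2) `&` Ovp p v gv kv `<=` Ovph nrm p v gv kv h.
Proof.
move=> Hh [Sc1 _ [/= Sg1 _] hE _] x [].
move=> [c1' [c2' [gam [_ [Sc1' [_ [[Sgam1 _] [x1E [_ DK]]]]]]]]].
have [k [del [Kk [Sdel1 _] [= y1E _]]]] := DK.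
move=> [hi [hp [gam0 [Hhi Hhp Sgam0 xE]]]]; rewrite xE /= in x1E y1E; rewrite xE.
have [Sg01 _] := Sgam0.
set r := invmx g1 *m del.1 *m gam.1 *m invmx gam0.1.
have Sr : isSO (Zinvp p) r.
  have Sdel1Z := isSO_sub (@Zint_Zinvp p) Sdel1.
  exact (isSOM subZinvp (isSOM subZinvp (isSOM subZinvp (isSOV Sg1) Sdel1Z) Sgam1)
               (isSOV Sg01)).
have kr : k *m kv *m ratM R r = kv *m hi.
  have [U1 U01] := (isSO_unitmx (isSO_ratM ratR Sgam1), isSO_unitmx (isSO_ratM ratR Sg01)).
  by rewrite !(ratMM ratR) !(ratMV ratR) !mulmxA -y1E mulmxKV // mulmxK.
have Hr : isH v (Zinvp p) r.
  by apply: isH_of_K_rel Kk Kset1 (proj2 Hhi) Sr _; rewrite mul1mx.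
set a := c1' *m invmx (ratM F del.1) *m invmx c1.
have Sa : isSO ZpF a.
  exact (isSOM subZp (isSOM subZp Sc1' (isSOV (isSO_Zint_Zp Sdel1))) (isSOV Sc1)).
have hpE : hp = a *m h *m ratM F r.
  have [Uc1 Udel] := (isSO_unitmx Sc1, isSO_unitmx (isSO_ratM ratF Sdel1)).
  have [Ug1 U01] := (isSO_unitmx (isSO_ratM ratF Sg1), isSO_unitmx (isSO_ratM ratF Sg01)).
  rewrite hE !(ratMM ratF) !(ratMV ratF) !mulmxA mulmxKV // mulmxK // mulmxKV //.
  by rewrite -x1E mul1mx mulmxK.
exact: Ovp_point_in_Ovph Kk (isH_of_coset Sa Hh Hhp Hr hpE) Hr Sgam0 kr hpE.
Qed.

Lemma Ovph_sub_qinf_pre_Ovp h c1 c2 g1 g2 : isH v (@anyA F) h ->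
  hdecomp nrm p gv h c1 c2 g1 g2 ->
  Ovph nrm p v gv kv h `<=` qinf_pre nrm p (DKorbit v gv kv g1 g2) `&` Ovp p v gv kv.
Proof.
move=> Hh hd x [k [h' [gam0 [Kk Hh' Sgam0 ->]]]].
split; last exact: Ovph_point_in_Ovp.
have [c1' [c2' [gam [Sc1' Sc2' Sgam [= E1 E2] [= R1 R2]]]]] := Ovph_point_qinf k hd Hh' Sgam0.
exists c1', c2', gam; split; first exact (Ovph_point_inGA Hh Kk Hh' Sgam0).
do 5!(split; first done).
exists k, (1%:M, 1%:M); split=> //; first exact: inG1 subring_Zint.
by rewrite /= R1 R2 !(ratM1 ratR) !mulmx1.
Qed.

Lemma qinf_pre_DKorbit_Ovp h c1 c2 g1 g2 : isH v (@anyA F) h ->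
  hdecomp nrm p gv h c1 c2 g1 g2 ->
  qinf_pre nrm p (DKorbit v gv kv g1 g2) `&` Ovp p v gv kv = Ovph nrm p v gv kv h.
Proof.
move=> Hh hd; apply/seteqP; split.
  exact (qinf_pre_Ovp_sub_Ovph Hh hd).
exact (Ovph_sub_qinf_pre_Ovp Hh hd).
Qed.
End Orbits.

Unset Implicit Arguments. Set Strict Implicit.
Theorem proposition3p6 (R : realType) (F : fieldType) (nrm : F -> rat) (p n : nat)
  (v : 'cV[int]_n.+1) (gv : 'M[int]_n.+1) (kv : 'M[R]_n.+1)
  (M : seq 'M[F]_n.+1) :
  (1 <= n)%N -> prime p -> odd p -> is_Qp p nrm ->
  primitive v -> is_gv v gv ->
  isSO (@anyA R) kv -> kv *m vA R v = normv R v *: e_last R n ->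
  is_reps nrm p v M ->
  (* (1) *)
  (forall h c1 c2 gam1 gam2, inM0 nrm p M h -> hdecomp nrm p gv h c1 c2 gam1 gam2 ->
     qinf_img nrm p (Ovph nrm p v gv kv h) = DKorbit v gv kv gam1 gam2) /\
  (* (2) *)
  (forall h h' c1 c2 gam1 gam2 c1' c2' gam1' gam2',
     inM0 nrm p M h -> inM0 nrm p M h' -> h <> h' ->
     hdecomp nrm p gv h c1 c2 gam1 gam2 -> hdecomp nrm p gv h' c1' c2' gam1' gam2' ->
     Korbit1 kv gam1 `&` Korbit1 kv gam1' = set0 /\
     qinf_img nrm p (Ovph nrm p v gv kv h) `&` qinf_img nrm p (Ovph nrm p v gv kv h')
       = set0) /\
  (* (3) *)
  (forall h c1 c2 gam1 gam2, inM0 nrm p M h -> hdecomp nrm p gv h c1 c2 gam1 gam2 ->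
     qinf_pre nrm p (DKorbit v gv kv gam1 gam2) `&` Ovp p v gv kv
       = Ovph nrm p v gv kv h).
Proof.
move=> n_gt0 p_pr _ Qp_F v_prim gv_basis kv_SO kv_v M_reps.
have M0_isH h : inM0 nrm p M h -> isH v (@anyA F) h.
  by case: M_reps => M_isH _ _ [/M_isH].
split; [|split].
- by move=> h c1 c2 g1 g2 _; apply: qinf_img_Ovph.
- move=> h h' c1 c2 g1 g2 c1' c2' g1' g2' h_M0 h'_M0 hh' hd hd'.
  have K0 := Korbit1_disjoint p_pr Qp_F kv_SO kv_v M_reps h_M0 h'_M0 hh' hd hd'.
  by split=> //; exact (qinf_img_Ovph_disjoint p_pr Qp_F v_prim gv_basis hd hd' K0).
- by move=> h c1 c2 g1 g2 h_M0; apply: qinf_pre_DKorbit_Ovp (M0_isH h h_M0).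
Qed.
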